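(* Let $\mathcal H$ be a real Hilbert space, $v\in\mathcal H$ with $\|v\|=1$, $P$ the orthogonal projection onto $\{v\}^\perp$, and order $\mathcal H$ by the Lorentz cone $\mathcal L_v=\{x\in\mathcal H:\langle v|x\rangle\ge\|Px\|\}$. Let $x\in\mathcal H$ and let $Q$ be the orthogonal projection onto $\mathrm{span}\{x,v\}$. If $y\in\mathcal H$ satisfies $-x\le y$ and $x\le y$, then $-x\le Qy$ and $x\le Qy$.
   Context: $a\le b$ means $b-a\in\mathcal L_v$. *)

From HB Require Import structures.
From mathcomp Require Import all_boot all_order all_algebra.
From mathcomp Require Import all_classical all_reals all_analysis.
Import Order.TTheory GRing.Theory Num.Theory.
Import numFieldNormedType.Exports.
Set Implicit Arguments.
Unset Strict Implicit.
Local Open Scope classical_set_scope.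
Local Open Scope ring_scope.

(* A real Hilbert space: a complete real normed space V whose norm is
   induced by an inner product ip (symmetric, bilinear, ip x x = |x|^2). *)
Definition is_inner_product (R : realType) (V : completeNormedModType R)
  (ip : V -> V -> R) : Prop :=
  [/\ (forall x y, ip x y = ip y x),
      (forall (a : R) x y z, ip (a *: x + y) z = a * ip x z + ip y z)
    & (forall x, ip x x = `|x| ^+ 2)].

Definition orth_compl1 (R : realType) (V : completeNormedModType R)
  (ip : V -> V -> R) (v : V) : set V := [set z | ip v z = 0].

Definition span2 (R : realType) (V : completeNormedModType R) (x v : V) : set V :=
  [set z | exists a b : R, z = a *: x + b *: v].

Definition is_orth_proj (R : realType) (V : completeNormedModType R)
  (ip : V -> V -> R) (S : set V) (P : V -> V) : Prop :=
  forall z, S (P z) /\ (forall s, S s -> ip (z - P z) s = 0).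

Definition lorentz_cone (R : realType) (V : completeNormedModType R)
  (ip : V -> V -> R) (v : V) (P : V -> V) : set V :=
  [set z | `|P z| <= ip v z].

Definition lorentz_le (R : realType) (V : completeNormedModType R)
  (ip : V -> V -> R) (v : V) (P : V -> V) (a b : V) : Prop :=
  lorentz_cone ip v P (b - a).

From HB Require Import structures.
From mathcomp Require Import all_boot all_order all_algebra.
From mathcomp Require Import all_classical all_reals all_analysis.
From mathcomp Require Import ring lra.
Import Order.TTheory GRing.Theory Num.Theory.
Import numFieldNormedType.Exports.
Local Open Scope classical_set_scope.
Local Open Scope ring_scope.

(* If [w] is obtained from [z] by removing a component orthogonal to both [v]
   and [w], then [<v|w> = <v|z>] while [|w|^2 = |z|^2 - |z - w|^2].  Since
   [|P u|^2 = |u|^2 - <v|u>^2], the quantity [<v|u>^2 - |P u|^2] only grows,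
   so membership in the Lorentz cone is preserved.  Projecting onto a subspace
   containing [v] and [+-x] commutes with subtracting [+-x], which gives the
   theorem. *)

Section LorentzCone.
Variables (R : realType) (V : completeNormedModType R) (ip : V -> V -> R).
Hypothesis hip : is_inner_product ip.

Lemma ipC x y : ip x y = ip y x.
Proof. by case: hip. Qed.

Lemma ipDl x y z : ip (x + y) z = ip x z + ip y z.
Proof. by case: hip => _ lin _; have := lin 1 x y z; rewrite scale1r mul1r. Qed.

Lemma ip0l z : ip 0 z = 0.
Proof. by have := ipDl 0 0 z; rewrite addr0 => /eqP; rewrite addrC -subr_eq subrr => /eqP. Qed.

Lemma ipZl (a : R) x z : ip (a *: x) z = a * ip x z.
Proof. by case: hip => _ lin _; have := lin a x 0 z; rewrite addr0 ip0l addr0. Qed.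

Lemma ipBl x y z : ip (x - y) z = ip x z - ip y z.
Proof. by rewrite ipDl -scaleN1r ipZl mulN1r. Qed.

Lemma ipBr x y z : ip z (x - y) = ip z x - ip z y.
Proof. by rewrite ipC ipBl (ipC x) (ipC y). Qed.

Lemma ipZr (a : R) x z : ip z (a *: x) = a * ip z x.
Proof. by rewrite ipC ipZl ipC. Qed.

Lemma ip_norm x : ip x x = `|x| ^+ 2.
Proof. by case: hip. Qed.

Lemma pythagoras x y : ip x y = 0 -> `|x + y| ^+ 2 = `|x| ^+ 2 + `|y| ^+ 2.
Proof.
by move=> xy0; rewrite -!ip_norm !ipDl (ipC x) (ipC y) !ipDl xy0 (ipC y x) xy0; ring.
Qed.

Lemma norm_orth_split {z w} : ip (z - w) w = 0 ->
  `|z| ^+ 2 = `|w| ^+ 2 + `|z - w| ^+ 2.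
Proof. by move=> /pythagoras; rewrite subrK addrC. Qed.

Variables (v : V) (P : V -> V).
Hypothesis hv : `|v| = 1.
Hypothesis hP : is_orth_proj ip (orth_compl1 ip v) P.

Lemma norm_orth_compl1_proj u : `|P u| ^+ 2 = `|u| ^+ 2 - ip v u ^+ 2.
Proof.
have [Pu_orth_v Pu_orth] := hP u.
have vv1 : ip v v = 1 by rewrite ip_norm hv expr1n.
have vuPu : ip v (u - P u) = ip v u by rewrite ipBr Pu_orth_v subr0.
have uPu_norm : `|u - P u| ^+ 2 = ip v u ^+ 2.
  have w_orth : orth_compl1 ip v (u - P u - ip v (u - P u) *: v).
    by rewrite /orth_compl1 /= ipBr ipZr vv1 mulr1 subrr.
  have := Pu_orth _ w_orth.
  by rewrite ipBr ipZr ip_norm (ipC _ v) vuPu expr2 => /eqP; rewrite subr_eq0 => /eqP.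
have := Pu_orth _ Pu_orth_v => /norm_orth_split ->.
by rewrite uPu_norm; ring.
Qed.

Lemma lorentz_cone_orth_shrink z w :
  ip (z - w) v = 0 -> ip (z - w) w = 0 ->
  lorentz_cone ip v P z -> lorentz_cone ip v P w.
Proof.
rewrite /lorentz_cone /= => zw_v zw_w Pz_le.
have vw_vz : ip v w = ip v z by move: zw_v; rewrite ipBl (ipC z) (ipC w); lra.
have vz_ge0 : 0 <= ip v z by apply: le_trans Pz_le.
have Pz2_le : `|P z| ^+ 2 <= ip v z ^+ 2 by rewrite ler_pXn2r ?nnegrE.
have zw2_ge0 : 0 <= `|z - w| ^+ 2 := exprn_ge0 2 (normr_ge0 _).
rewrite vw_vz -(ler_pXn2r (n := 2)) ?nnegrE //.
move: Pz2_le; rewrite !norm_orth_compl1_proj vw_vz (norm_orth_split zw_w); lra.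
Qed.

Lemma lorentz_le_orth_proj (S : set V) (Q : V -> V) (y : V) :
  is_orth_proj ip S Q -> (forall a b, S a -> S b -> S (a - b)) -> S v ->
  forall u, S u -> lorentz_le ip v P u y -> lorentz_le ip v P u (Q y).
Proof.
move=> /(_ y) [SQy Qy_orth] subS Sv u Su yu_cone.
have shift_u : y - u - (Q y - u) = y - Q y by rewrite opprB addrA subrK.
apply: (lorentz_cone_orth_shrink _ _ _ _ yu_cone); rewrite shift_u; apply: Qy_orth => //.
exact: subS.
Qed.

End LorentzCone.

Lemma span2_subr (R : realType) (V : completeNormedModType R) (x v a b : V) :
  span2 x v a -> span2 x v b -> span2 x v (a - b).
Proof.
move=> [a1 [a2 ->]] [b1 [b2 ->]]; exists (a1 - b1), (a2 - b2).
by rewrite !scalerBl opprD addrACA.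
Qed.

Theorem lemma7p6 (R : realType) (V : completeNormedModType R)
  (ip : V -> V -> R) (hip : is_inner_product ip)
  (v : V) (hv : `|v| = 1)
  (P : V -> V) (hP : is_orth_proj ip (orth_compl1 ip v) P)
  (x : V) (Q : V -> V) (hQ : is_orth_proj ip (span2 x v) Q)
  (y : V) (h1 : lorentz_le ip v P (- x) y) (h2 : lorentz_le ip v P x y) :
  lorentz_le ip v P (- x) (Q y) /\ lorentz_le ip v P x (Q y).
Proof.
have Sv : span2 x v v by exists 0, 1; rewrite scale0r add0r scale1r.
have Sx : span2 x v x by exists 1, 0; rewrite scale0r addr0 scale1r.
have SNx : span2 x v (- x) by exists (-1), 0; rewrite scale0r addr0 scaleN1r.
have orth_shrink := @lorentz_le_orth_proj _ _ _ hip _ _ hv hP _ _ y hQ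
  (@span2_subr _ _ x v) Sv.
by split; [apply: orth_shrink SNx h1 | apply: orth_shrink Sx h2].
Qed.
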